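(* Let $\mathbb{F}$ be a finite field. For every $k\in\mathbb{N}$ there exists a CMSO formula $\mathrm{cc}(X,Z,\langle Y_1\rangle,\dots,\langle Y_k\rangle)$ over $\Sigma_{\mathbb{F}}$ such that for every matrix $A$ over $\mathbb{F}$, all sets $S\subseteq T$ of columns of $A$ and all virtual columns $\langle Q_1\rangle,\dots,\langle Q_k\rangle$ of $\mathcal{S}(A)$, we have $\mathcal{S}(A)\models\mathrm{cc}(S,T,\langle Q_1\rangle,\dots,\langle Q_k\rangle)$ if and only if $S$ is a connected component of the restriction $M(A,\{v(\langle Q_1\rangle),\dots,v(\langle Q_k\rangle)\})[T]$.
   Context: $\Sigma_{\mathbb{F}}$ has unary symbols $R,C$ and binary symbols $\mathrm{Entry}_\alpha$ ($\alpha\in\mathbb{F}$). For a matrix $A$ with rows $r_1,\dots,r_m$, $\mathcal{S}(A)$ has universe rows $\cup$ columns, $R$ = rows, $C$ = columns, $\mathrm{Entry}_\alpha=\{(r,c):A(r,c)=\alpha\}$. CMSO is monadic second-order logic with predicates $\mathrm{mod}_{a,b}(X)$ meaning $|X|\equiv a\pmod b$. A virtual column is a family $\langle Q\rangle=\{Q_\alpha\}_{\alpha\in\mathbb{F}}$ of pairwise disjoint sets of rows covering all rows, with vector $v(\langle Q\rangle)\in\mathbb{F}^m$ whose $i$-th coordinate is $\alpha$ where $r_i\in Q_\alpha$; in formulas it is an $\mathbb{F}$-indexed tuple of set variables. For $v_1,\dots,v_k\in\mathbb{F}^m$, $M(A,\{v_1,\dots,v_k\})$ is the matroid on the columns of $A$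 in which a set $\{u_1,\dots,u_\ell\}$ is dependent iff there exist $\alpha_i$, not all $0$, with $\sum_i\alpha_iu_i\in\mathrm{span}(v_1,\dots,v_k)$. $M[T]$ is the restriction to $T$; a connected component is an inclusion-wise maximal set any two elements of which lie in a common circuit. *)

From HB Require Import structures.
From mathcomp Require Import all_boot all_order all_algebra.
Set Implicit Arguments. Unset Strict Implicit. Unset Printing Implicit Defensive.
Import GRing.Theory.
Local Open Scope ring_scope.

Inductive cmso (L : Type) : Type :=
| CRow (x : nat)
| CCol (x : nat)
| CEntry (a : L) (x y : nat)
| CEq (x y : nat)
| CIn (x X : nat)
| CMod (a b : nat) (X : nat)
| CNot (phi : cmso L)
| CAnd (phi psi : cmso L)
| CEx (x : nat) (phi : cmso L)
| CExS (X : nat) (phi : cmso L).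

Record cstruct (L : Type) := CStruct {
  cs_univ : finType;
  cs_R : pred cs_univ;
  cs_C : pred cs_univ;
  cs_Ent : L -> rel cs_univ }.
Arguments cs_univ {L}. Arguments cs_R {L}. Arguments cs_C {L}. Arguments cs_Ent {L}.

Definition upd (T : Type) (f : nat -> T) (x : nat) (v : T) : nat -> T :=
  fun y => if y == x then v else f y.

Fixpoint sat {L : Type} (M : cstruct L) (ef : nat -> cs_univ M)
    (es : nat -> {set cs_univ M}) (phi : cmso L) : Prop :=
  match phi with
  | CRow x => cs_R M (ef x)
  | CCol x => cs_C M (ef x)
  | CEntry a x y => cs_Ent M a (ef x) (ef y)
  | CEq x y => ef x = ef y
  | CIn x X => ef x \in es X
  | CMod a b X => (#|es X| = a %[mod b])%N
  | CNot p => ~ @sat L M ef es p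
  | CAnd p q => @sat L M ef es p /\ @sat L M ef es q
  | CEx x p => exists u : cs_univ M, @sat L M (upd ef x u) es p
  | CExS X p => exists U : {set cs_univ M}, @sat L M ef (upd es X U) p
  end.

Section SA.
Variables (F : fieldType) (m n : nat) (A : 'M[F]_(m, n)).
Definition SA_R (u : ('I_m + 'I_n)%type) : bool := if u is inl _ then true else false.
Definition SA_C (u : ('I_m + 'I_n)%type) : bool := if u is inr _ then true else false.
Definition SA_E (a : F) (u w : ('I_m + 'I_n)%type) : bool :=
  match u, w with inl i, inr j => A i j == a | _, _ => false end.
End SA.

Definition SA (F : fieldType) (m n : nat) (A : 'M[F]_(m, n)) : cstruct F :=
  @CStruct F ('I_m + 'I_n)%type (@SA_R m n) (@SA_C m n) (SA_E A).

Definition is_vcol (F : finFieldType) (m : nat) (Q : F -> {set 'I_m}) : Prop :=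
  (forall a b : F, a != b -> [disjoint Q a & Q b]) /\
  (forall i : 'I_m, exists a : F, i \in Q a).

Definition vvec (F : finFieldType) (m : nat) (Q : F -> {set 'I_m}) : 'cV[F]_m :=
  \col_i (odflt 0 [pick a | i \in Q a]).

(* Name of the set variable Y_{i,alpha} (the alpha-component of <Y_{i+1}>);
   X is set variable 0 and Z is set variable 1. *)
Definition vcvar (F : finFieldType) (k : nat) (i : 'I_k) (a : F) : nat :=
  (2 + i * #|F| + enum_rank a)%N.

Section Matroid.
Variables (F : fieldType) (m n k : nat) (A : 'M[F]_(m, n)) (vs : 'I_k -> 'cV[F]_m).

Definition mdependent (X : {set 'I_n}) : Prop :=
  exists c : 'I_n -> F, (exists2 j, j \in X & c j != 0) /\
    exists d : 'I_k -> F, \sum_(j in X) c j *: col j A = \sum_(i < k) d i *: vs i.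

Definition mcircuit (X : {set 'I_n}) : Prop :=
  mdependent X /\ forall Y : {set 'I_n}, Y \proper X -> ~ mdependent Y.

(* Circuits of the restriction M[T] are the circuits of M contained in T. *)
Definition clique_in (T S : {set 'I_n}) : Prop :=
  forall x y, x \in S -> y \in S -> x != y ->
    exists C : {set 'I_n}, [/\ mcircuit C, C \subset T, x \in C & y \in C].

Definition conn_comp (T S : {set 'I_n}) : Prop :=
  [/\ S \subset T, clique_in T S &
      forall S' : {set 'I_n}, S \subset S' -> S' \subset T -> clique_in T S' -> S' = S].
End Matroid.

From mathcomp Require Import all_boot all_order all_algebra finfield.
From Stdlib Require Import Classical FunctionalExtensionality.
Set Implicit Arguments. Unset Strict Implicit. Unset Printing Implicit Defensive.
Import GRing.Theory.
Local Open Scope ring_scope.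

(* Linear dependence of a set X of columns modulo span(v_1, ..., v_k) is CMSO-definable:
   guess the coefficient vector c as the partition of X into the sets P_a (a in F) of
   columns with coefficient a, and guess the coefficients d in F^k of the virtual columns
   by a finite disjunction; then check the equation row by row.  In row i,
   sum_(j in X) c_j A_ij = sum_g N_g g, where N_g counts the columns j in X with
   c_j A_ij = g; only N_g modulo the characteristic of F matters, and that is what
   mod_(t,p) expresses.  Circuits, pairs of columns lying in a common circuit inside T,
   and maximal sets of such pairwise connected columns are then defined from dependence
   by monadic quantification. *)

#[local] Arguments CRow {L} x.
#[local] Arguments CEq {L} x y.
#[local] Arguments CIn {L} x X.
#[local] Arguments CMod {L} a b X.

Lemma upd_eq (T : Type) (f : nat -> T) x v : upd f x v x = v.
Proof. by rewrite /upd eqxx. Qed.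

Lemma upd_neq (T : Type) (f : nat -> T) x v y : y != x -> upd f x v y = f y.
Proof. by rewrite /upd => /negPf ->. Qed.

Lemma upd_updSn (T : Type) (f : nat -> T) b v u : upd (upd f b v) b.+1 u b = v.
Proof. by rewrite upd_neq ?ltn_eqF ?upd_eq. Qed.

Definition upds (T : Type) (f : nat -> T) (I : finType) (v : I -> nat) (g : I -> T) :
    nat -> T :=
  fun y => if [pick a | v a == y] is Some a then g a else f y.

Lemma upds_eq (T : Type) (f : nat -> T) (I : finType) (v : I -> nat) g a :
  injective v -> upds f v g (v a) = g a.
Proof. by move=> inj_v; rewrite /upds; case: pickP => [a' /eqP/inj_v -> | /(_ a)/eqP]. Qed.

Lemma upds_out (T : Type) (f : nat -> T) (I : finType) (v : I -> nat) g y :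
  (forall a, v a != y) -> upds f v g y = f y.
Proof. by move=> v_neq; rewrite /upds; case: pickP => // a; rewrite (negPf (v_neq a)). Qed.

Section DerivedConnectives.
Context {L : Type}.

Definition CTrue : cmso L := CEq 0%N 0%N.
Definition COr (p q : cmso L) := CNot (CAnd (CNot p) (CNot q)).
Definition CImp (p q : cmso L) := CNot (CAnd p (CNot q)).
Definition CIff (p q : cmso L) := CAnd (CImp p q) (CImp q p).
Definition CAll x (p : cmso L) := CNot (CEx x (CNot p)).
Definition CAllS X (p : cmso L) := CNot (CExS X (CNot p)).
Definition CBigOr (T : Type) (s : seq T) (f : T -> cmso L) :=
  foldr (fun x q => COr (f x) q) (CNot CTrue) s.
Definition CBigAnd (T : Type) (s : seq T) (f : T -> cmso L) :=
  foldr (fun x q => CAnd (f x) q) CTrue s.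
Definition CExSs (Xs : seq nat) (p : cmso L) := foldr (@CExS L) p Xs.
Definition CSubset X Y : cmso L := CAll 0 (CImp (CIn 0%N X) (CIn 0%N Y)).

Variable M : cstruct L.
Implicit Types (ef : nat -> cs_univ M) (es : nat -> {set cs_univ M}) (p q : cmso L).

(* Stated to keep both conjuncts folded when a hypothesis is destructed. *)
Lemma sat_and ef es p q : sat ef es (CAnd p q) <-> sat ef es p /\ sat ef es q.
Proof. by []. Qed.

Lemma sat_or ef es p q : sat ef es (COr p q) <-> sat ef es p \/ sat ef es q.
Proof. by rewrite /=; tauto. Qed.

Lemma sat_imp ef es p q : sat ef es (CImp p q) <-> (sat ef es p -> sat ef es q).
Proof. by rewrite /=; tauto. Qed.

Lemma sat_iff ef es p q : sat ef es (CIff p q) <-> (sat ef es p <-> sat ef es q).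
Proof. by rewrite /=; tauto. Qed.

Lemma sat_all ef es x p : sat ef es (CAll x p) <-> forall u, sat (upd ef x u) es p.
Proof.
split=> [H u | H [u]]; last by move/(_ (H u)).
by apply: NNPP => npu; apply: H; exists u.
Qed.

Lemma sat_allS ef es X p : sat ef es (CAllS X p) <-> forall U, sat ef (upd es X U) p.
Proof.
split=> [H U | H [U]]; last by move/(_ (H U)).
by apply: NNPP => npU; apply: H; exists U.
Qed.

Lemma sat_bigOr (T : eqType) (s : seq T) f ef es :
  sat ef es (CBigOr s f) <-> exists2 x, x \in s & sat ef es (f x).
Proof.
elim: s => [|x s IH]; first by split=> [[]|[]].
rewrite [CBigOr _ _]/= sat_or IH; split=> [[fx | [y sy fy]] | [y]].
- by exists x; rewrite ?mem_head.
- by exists y; rewrite // in_cons sy orbT.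
- by rewrite in_cons => /predU1P[-> | sy] fy; [left | right; exists y].
Qed.

Lemma sat_bigAnd (T : eqType) (s : seq T) f ef es :
  sat ef es (CBigAnd s f) <-> forall x, x \in s -> sat ef es (f x).
Proof.
elim: s => [|x s IH] //=; rewrite -/(CBigAnd s f) IH; split=> [[fx fs] y | fs].
- by rewrite in_cons => /predU1P[-> | /fs].
- by split=> [|y sy]; apply: fs; rewrite ?mem_head // in_cons sy orbT.
Qed.

Lemma sat_subset ef es X Y : sat ef es (CSubset X Y) <-> es X \subset es Y.
Proof.
rewrite sat_all; split=> [H | /subsetP H u].
- by apply/subsetP=> u; have /sat_imp := H u; rewrite /= upd_eq.
- by apply/sat_imp; rewrite /= upd_eq; apply: H.
Qed.

Lemma sat_exSs Xs p ef es :
  sat ef es (CExSs Xs p) <->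
  exists2 es', (forall y, y \notin Xs -> es' y = es y) & sat ef es' p.
Proof.
elim: Xs es => [|X Xs IH] es /=.
  split=> [sp | [es' es'E]]; first by exists es.
  by have -> : es' = es by apply: functional_extensionality => y; apply: es'E.
split=> [[U /IH[es' es'E sp]] | [es' es'E sp]].
  exists es' => // y; rewrite in_cons negb_or => /andP[yX yXs].
  by rewrite es'E // upd_neq.
exists (es' X); apply/IH; exists es' => // y yXs.
rewrite /upd; case: eqP => [-> // | /eqP yX]; apply: es'E.
by rewrite in_cons negb_or yX.
Qed.

Lemma sat_exS_family (I : finType) (v : I -> nat) p ef es : injective v ->
  sat ef es (CExSs [seq v a | a <- enum I] p) <->
  exists P : I -> {set cs_univ M}, sat ef (upds es v P) p.
Proof.
move=> inj_v; rewrite sat_exSs; split=> [[es' es'E sp] | [P sp]].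
  exists (es' \o v); congr (sat _ _ _): sp; apply: functional_extensionality => y.
  rewrite /upds; case: pickP => [a /eqP <- // | nv]; apply: es'E.
  by apply/mapP=> -[a _ ya]; have := nv a; rewrite ya eqxx.
exists (upds es v P) => // y yv; apply: upds_out => a; apply: contra yv => /eqP <-.
exact: map_f (mem_enum _ a).
Qed.
End DerivedConnectives.

Definition charF (F : finFieldType) : nat := s2val (finPcharP F).

Lemma charF_gt0 (F : finFieldType) : (0 < charF F)%N.
Proof. exact/prime_gt0/(s2valP (finPcharP F)). Qed.

Lemma sumr_fibres_mod_char (F : finFieldType) (I : finType) (X : {set I}) (f : I -> F) :
  \sum_(j in X) f j = \sum_g (#|[set j in X | f j == g]| %% charF F)%:R * g.
Proof.
rewrite (partition_big f predT) //=; apply: eq_bigr => g _.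
rewrite (GRing.natr_mod_pchar (s2valP' (finPcharP F))) mulr_natl -sumr_const.
by apply: eq_big => [j | j /andP[_ /eqP]]; rewrite ?inE.
Qed.

Lemma mem_vcol (F : finFieldType) m (Q : F -> {set 'I_m}) i a :
  is_vcol Q -> (i \in Q a) = (vvec Q i 0 == a).
Proof.
case=> disjQ coverQ; have Qv : i \in Q (vvec Q i 0).
  rewrite /vvec mxE; case: pickP => [a0 // | noQ].
  by have [a' ] := coverQ i; rewrite noQ.
apply/idP/eqP => [Qa | <- //]; apply/eqP; apply: contraT => ne.
by have := disjointFr (disjQ _ _ ne) Qv; rewrite Qa.
Qed.

Section SumImset.
Variables A B : finType.

Lemma mem_inl_imset (X : {set A}) x : ((inl x : A + B) \in inl @: X) = (x \in X).
Proof. exact/mem_imset/inl_inj. Qed.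

Lemma mem_inr_imset (X : {set B}) x : ((inr x : A + B) \in inr @: X) = (x \in X).
Proof. exact/mem_imset/inr_inj. Qed.

Lemma inl_notin_inr_imset (X : {set B}) x : ((inl x : A + B) \in inr @: X) = false.
Proof. by apply/imsetP => -[]. Qed.

Lemma imset_inr_subset (X Y : {set B}) :
  (inr @: X \subset (inr @: Y : {set A + B})) = (X \subset Y).
Proof.
apply/subsetP/subsetP => XY j; last by case/imsetP => j' Xj' ->; rewrite mem_inr_imset XY.
by move=> Xj; have := XY (inr j); rewrite !mem_inr_imset; apply.
Qed.

Lemma subset_inr_imsetP (X : {set B}) (Y : {set A + B}) :
  reflect (exists2 Y' : {set B}, Y' \subset X & Y = inr @: Y') (Y \subset inr @: X).
Proof.
apply: (iffP idP) => [/subsetP YX | [Y' Y'X ->]]; last by rewrite imset_inr_subset.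
exists (inr @^-1: Y).
  by apply/subsetP => j; rewrite inE => /YX; rewrite mem_inr_imset.
apply/setP=> -[a | j]; last by rewrite mem_inr_imset inE.
by rewrite inl_notin_inr_imset; apply/negbTE/negP => /YX; rewrite inl_notin_inr_imset.
Qed.
End SumImset.

Lemma partition_classes (I T V : finType) (f : I -> T) (v0 : V) (X : {set I})
    (P : V -> {set T}) :
  (forall a, P a \subset f @: X) -> (forall j, j \in X -> exists a, f j \in P a) ->
  (forall a a' u, u \in P a -> u \in P a' -> a = a') ->
  exists c : I -> V, forall a, P a = f @: [set j in X | c j == a].
Proof.
move=> subX coverX disj; exists (fun j => odflt v0 [pick a | f j \in P a]) => a.
apply/setP => u; apply/idP/imsetP => [Pa | [j /[!inE] /andP[Xj /eqP <-] ->]].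
  have /imsetP[j Xj uj] := subsetP (subX a) u Pa; exists j => //; rewrite inE Xj /=.
  by case: pickP => [a' | /(_ a)]; rewrite -uj ?Pa // => /disj/(_ Pa) ->.
case: pickP => [a' // | none]; have [a' Pa'] := coverX j Xj.
by have := none a'; rewrite Pa'.
Qed.

Definition nreserved (F : finFieldType) k : nat := (2 + k * #|F|)%N.

Lemma vcvar_lt (F : finFieldType) k (l : 'I_k) (a : F) : (vcvar l a < nreserved F k)%N.
Proof.
rewrite /vcvar /nreserved -addnA ltn_add2l.
apply: (@leq_trans (l * #|F| + #|F|)); first by rewrite ltn_add2l.
by rewrite -mulSnr leq_mul2r ltn_ord orbT.
Qed.

Section Formulas.
Variables (F : finFieldType) (k : nat).
Implicit Types (b x : nat) (g : F).

(* A formula built at base [b] binds only the set variables [>= b], namely [coefvar b a]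
   (the columns with coefficient [a]) and [fibrevar b]; the set variables below [b] are
   its parameters.  Its first-order variables ([b] for a row, [b.+1] for a column) are
   all bound. *)
Definition coefvar b (a : F) : nat := (b + enum_rank a)%N.
Definition fibrevar b : nat := (b + #|F|)%N.

Definition fibre_mem_form b g : cmso F :=
  CBigOr (enum [pred aa : F * F | aa.1 * aa.2 == g])
    (fun aa => CAnd (CIn b.+1 (coefvar b aa.1)) (CEntry aa.2 b b.+1)).
Definition fibre_form b g : cmso F :=
  CAll b.+1 (CIff (CIn b.+1 (fibrevar b)) (fibre_mem_form b g)).
Definition fibre_card_form b g (t : 'I_(charF F)) : cmso F :=
  CExS (fibrevar b) (CAnd (fibre_form b g) (CMod t (charF F) (fibrevar b))).
Definition row_vcols_form b (e : {ffun 'I_k -> F}) : cmso F :=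
  CBigAnd (enum 'I_k) (fun l => CIn b (vcvar l (e l))).
(* In row [i] (variable [b]): sum_g t_g g = sum_l d_l e_l, where [t_g] is the number,
   modulo the characteristic, of the columns [j] with [c_j A_ij = g], and [e] is row [i]
   of the virtual columns. *)
Definition row_eqn_form b (d : {ffun 'I_k -> F}) : cmso F :=
  CBigOr (enum [pred te : {ffun F -> 'I_(charF F)} * {ffun 'I_k -> F} |
                \sum_g (te.1 g)%:R * g == \sum_l d l * te.2 l])
    (fun te => CAnd (row_vcols_form b te.2)
                    (CBigAnd (enum F) (fun g => fibre_card_form b g (te.1 g)))).

Definition coef_classes_form b x : cmso F := CAll b.+1 (CAnd
  (CBigAnd (enum F) (fun a => CImp (CIn b.+1 (coefvar b a)) (CIn b.+1 x)))
  (CAnd (CImp (CIn b.+1 x) (CBigOr (enum F) (fun a => CIn b.+1 (coefvar b a))))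
        (CBigAnd (enum [pred aa : F * F | aa.1 != aa.2])
           (fun aa => CNot (CAnd (CIn b.+1 (coefvar b aa.1)) (CIn b.+1 (coefvar b aa.2))))))).
Definition nonzero_coef_form b : cmso F :=
  CBigOr (enum [pred a : F | a != 0]) (fun a => CEx b.+1 (CIn b.+1 (coefvar b a))).
Definition row_eqns_form b (d : {ffun 'I_k -> F}) : cmso F :=
  CAll b (CImp (CRow b) (row_eqn_form b d)).
Definition dep_form b x : cmso F := CBigOr (enum {ffun 'I_k -> F}) (fun d =>
  CExSs [seq coefvar b a | a <- enum F]
    (CAnd (coef_classes_form b x) (CAnd (nonzero_coef_form b) (row_eqns_form b d)))).
Definition circuit_form b x : cmso F :=
  CAnd (dep_form b.+1 x)
       (CAllS b (CImp (CAnd (CSubset b x) (CNot (CSubset x b))) (CNot (dep_form b.+1 b)))).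
Definition clique_form b x : cmso F :=
  CAll b (CAll b.+1 (CImp (CAnd (CIn b x) (CAnd (CIn b.+1 x) (CNot (CEq b b.+1))))
    (CExS b (CAnd (CSubset b 1) (CAnd (CIn b b) (CAnd (CIn b.+1 b) (circuit_form b.+2 b))))))).
Definition component_form : cmso F :=
  CAnd (CSubset 0 1) (CAnd (clique_form (nreserved F k) 0)
    (CAllS (nreserved F k) (CImp
       (CAnd (CSubset 0 (nreserved F k))
          (CAnd (CSubset (nreserved F k) 1)
                (clique_form (nreserved F k).+1 (nreserved F k))))
       (CSubset (nreserved F k) 0)))).
End Formulas.

Lemma coefvar_inj (F : finFieldType) b : injective (@coefvar F b).
Proof. by move=> a a' /addnI /ord_inj /enum_rank_inj. Qed.

Lemma coefvar_neq_fibrevar (F : finFieldType) b (a : F) : coefvar b a != fibrevar F b.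
Proof. by rewrite eqn_add2l ltn_eqF. Qed.

Lemma sat_coef_classes_form (F : finFieldType) (M : cstruct F) (ef : nat -> cs_univ M)
    es b x :
  sat ef es (coef_classes_form F b x) <->
  [/\ forall a : F, es (coefvar b a) \subset es x,
      forall u, u \in es x -> exists a : F, u \in es (coefvar b a)
    & forall (a a' : F) u, u \in es (coefvar b a) -> u \in es (coefvar b a') -> a = a'].
Proof.
rewrite sat_all; split=> [classes | [sub cover disj] u].
  split=> [a | u | a a' u Pa Pa'].
  - apply/subsetP => u; have /sat_and[/sat_bigAnd sub _] := classes u.
    by have /sat_imp := sub a (mem_enum _ a); rewrite /= !upd_eq.
  - have /sat_and[_ /sat_and[/sat_imp cover _]] := classes u.
    rewrite -{1}(upd_eq ef b.+1 u) => /cover/sat_bigOr[a _].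
    by rewrite /= upd_eq; exists a.
  - have /sat_and[_ /sat_and[_ /sat_bigAnd disj]] := classes u.
    by apply/eqP/negP => /negP ne; apply: (disj (a, a')); rewrite ?mem_enum //= !upd_eq.
split; [|split].
- by apply/sat_bigAnd => a _; apply/sat_imp; rewrite /= !upd_eq; exact/subsetP.
- apply/sat_imp; rewrite /= upd_eq => /cover[a Pa].
  by apply/sat_bigOr; exists a; rewrite ?mem_enum //= upd_eq.
- apply/sat_bigAnd => -[a a']; rewrite mem_enum inE /= !upd_eq => ne [Pa Pa'].
  by move: ne; rewrite (disj _ _ _ Pa Pa') eqxx.
Qed.

Section Semantics.
Variables (F : finFieldType) (k m n : nat) (A : 'M[F]_(m, n)) (Q : 'I_k -> F -> {set 'I_m}).
Hypothesis vcolQ : forall l, is_vcol (Q l).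
Notation U := ('I_m + 'I_n)%type.
Notation sat_A := (@sat F (SA A)).
Notation vs := (fun l => vvec (Q l)).
Implicit Types (ef : nat -> U) (es : nat -> {set U}) (X : {set 'I_n}) (c : 'I_n -> F).

Definition encodes_vcols es := forall l a, es (vcvar l a) = inl @: Q l a.

Definition coef_set X c a : {set U} := inr @: [set j in X | c j == a].

Definition encodes_coefs es b X c := forall a, es (coefvar b a) = coef_set X c a.

Definition fibre X c i g := [set j in X | c j * A i j == g].

Lemma sat_fibre_mem_form b g ef es X c i u : encodes_coefs es b X c ->
  sat_A (upd (upd ef b (inl i)) b.+1 u) es (fibre_mem_form b g) <->
  u \in inr @: fibre X c i g.
Proof.
move=> esc; rewrite sat_bigOr; split=> [[[a a']] | ].
  rewrite mem_enum inE /= => /eqP <- [] /=; rewrite upd_updSn upd_eq esc.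
  case: u => [r | j]; first by rewrite inl_notin_inr_imset.
  rewrite /coef_set /fibre !mem_inr_imset !inE /= => /andP[Xj /eqP <-] /eqP <-.
  by rewrite Xj eqxx.
case/imsetP => j; rewrite inE => /andP[Xj /eqP <-] ->.
exists (c j, A i j); first by rewrite mem_enum inE.
by split; rewrite /= ?upd_updSn upd_eq ?esc /coef_set ?mem_inr_imset ?inE ?Xj /=.
Qed.

Lemma sat_fibre_form b g ef es X c i W : encodes_coefs es b X c ->
  sat_A (upd ef b (inl i)) (upd es (fibrevar F b) W) (fibre_form b g) <->
  W = inr @: fibre X c i g.
Proof.
move=> esc; have esWc W' : encodes_coefs (upd es (fibrevar F b) W') b X c.
  by move=> a; rewrite upd_neq ?coefvar_neq_fibrevar.
rewrite sat_all; split=> [W_fibre | -> u].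
  apply/setP => u; have /sat_iff := W_fibre u.
  rewrite (sat_fibre_mem_form _ _ _ _ (esWc W)) /= !upd_eq => -[WF FW].
  by apply/idP/idP; [exact: WF | exact: FW].
by apply/sat_iff; rewrite (sat_fibre_mem_form _ _ _ _ (esWc _)) /= !upd_eq.
Qed.

Lemma sat_fibre_card_form b g t ef es X c i : encodes_coefs es b X c ->
  sat_A (upd ef b (inl i)) es (fibre_card_form b g t) <->
  t = (#|fibre X c i g| %% charF F)%N :> nat.
Proof.
move=> esc; split=> [[W [/(sat_fibre_form _ _ _ _ esc) -> /=]] | t_card].
  by rewrite upd_eq card_imset => [-> | ]; [rewrite modn_small | exact: inr_inj].
exists (inr @: fibre X c i g); split; first exact/(sat_fibre_form _ _ _ _ esc).
by rewrite /= upd_eq card_imset ?t_card ?modn_mod //; exact: inr_inj.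
Qed.

Lemma sat_row_vcols_form b (e : {ffun 'I_k -> F}) ef es i : encodes_vcols es ->
  sat_A (upd ef b (inl i)) es (row_vcols_form b e) <-> e = [ffun l => vvec (Q l) i 0].
Proof.
move=> esQ; rewrite sat_bigAnd; split=> [e_vcol | -> l _].
  apply/ffunP => l; rewrite ffunE; apply/esym/eqP; rewrite -mem_vcol //.
  by have := e_vcol l (mem_enum _ l); rewrite /= upd_eq esQ mem_inl_imset.
by rewrite /= upd_eq esQ ffunE mem_inl_imset mem_vcol.
Qed.

Lemma sat_row_eqn_form b (d : {ffun 'I_k -> F}) ef es X c i :
  encodes_vcols es -> encodes_coefs es b X c ->
  sat_A (upd ef b (inl i)) es (row_eqn_form b d) <->
  \sum_(j in X) c j * A i j = \sum_l d l * vvec (Q l) i 0.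
Proof.
move=> esQ esc; pose cnt g := (#|fibre X c i g| %% charF F)%N.
have -> : \sum_(j in X) c j * A i j = \sum_g (cnt g)%:R * g.
  exact: sumr_fibres_mod_char.
rewrite sat_bigOr; split=> [[[t e]] | row_eq].
  rewrite mem_enum inE /= => /eqP t_e [/(sat_row_vcols_form _ _ _ _ esQ) e_v /sat_bigAnd t_cnt].
  have -> : \sum_g (cnt g)%:R * g = \sum_g (t g)%:R * g.
    apply: eq_bigr => g _.
    by have /(sat_fibre_card_form _ _ _ _ esc) -> := t_cnt g (mem_enum _ g).
  by rewrite t_e e_v; apply: eq_bigr => l _; rewrite ffunE.
have cnt_lt g : (cnt g < charF F)%N by rewrite ltn_mod charF_gt0.
exists ([ffun g => Ordinal (cnt_lt g)], [ffun l => vvec (Q l) i 0]).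
  rewrite mem_enum inE /=; apply/eqP; transitivity (\sum_g (cnt g)%:R * g).
    by apply: eq_bigr => g _; rewrite ffunE.
  by rewrite row_eq; apply: eq_bigr => l _; rewrite ffunE.
split; first exact/(sat_row_vcols_form _ _ _ _ esQ).
by apply/sat_bigAnd => g _; apply/(sat_fibre_card_form _ _ _ _ esc); rewrite ffunE.
Qed.

Lemma sat_coef_classes_form_cols b x ef es X : es x = inr @: X ->
  sat_A ef es (coef_classes_form F b x) <-> exists c, encodes_coefs es b X c.
Proof.
move=> esX; rewrite sat_coef_classes_form esX; split=> [[sub cover disj] | [c esc]].
  apply: (partition_classes (P := fun a => es (coefvar b a)) 0 sub _ disj) => j Xj.
  by apply: cover; rewrite mem_inr_imset.
split=> [a | u | a a' u]; rewrite ?esc.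
- by apply: imsetS; apply/subsetP => j; rewrite inE => /andP[].
- case/imsetP => j Xj ->; exists (c j).
  by rewrite esc /coef_set mem_inr_imset inE Xj eqxx.
- case/imsetP => j /[!inE] /andP[_ /eqP <-] ->.
  by case/imsetP => j' /[!inE] /andP[_ /eqP <-] [->].
Qed.

Lemma sat_nonzero_coef_form b ef es X c : encodes_coefs es b X c ->
  sat_A ef es (nonzero_coef_form F b) <-> exists2 j, j \in X & c j != 0.
Proof.
move=> esc; rewrite sat_bigOr; split=> [[a] | [j Xj cj0]].
  rewrite mem_enum inE => a0 [[r | j]]; rewrite /= upd_eq esc /coef_set.
    by rewrite inl_notin_inr_imset.
  by rewrite mem_inr_imset inE => /andP[Xj /eqP cja]; exists j; rewrite // cja.
exists (c j); rewrite ?mem_enum ?inE //; exists (inr j).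
by rewrite /= upd_eq esc /coef_set mem_inr_imset inE Xj eqxx.
Qed.

Lemma sat_row_eqns_form b d ef es X c : encodes_vcols es -> encodes_coefs es b X c ->
  sat_A ef es (row_eqns_form b d) <->
  forall i, \sum_(j in X) c j * A i j = \sum_l d l * vvec (Q l) i 0.
Proof.
move=> esQ esc; rewrite sat_all; split=> [rows i | rows u].
  have /sat_imp := rows (inl i); rewrite /= upd_eq => /(_ isT).
  by move/(sat_row_eqn_form _ _ _ esQ esc).
apply/sat_imp; rewrite /= upd_eq; case: u => [i | j] //= _.
exact/(sat_row_eqn_form _ _ _ esQ esc).
Qed.

Lemma mdependentE X : mdependent A vs X <->
  exists c, (exists2 j, j \in X & c j != 0) /\
    exists d : {ffun 'I_k -> F},
      forall i, \sum_(j in X) c j * A i j = \sum_l d l * vvec (Q l) i 0.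
Proof.
have entry c (d : 'I_k -> F) i :
    (\sum_(j in X) c j *: col j A - \sum_l d l *: vvec (Q l)) i 0 =
    \sum_(j in X) c j * A i j - \sum_l d l * vvec (Q l) i 0.
  by rewrite !mxE !summxE; congr (_ - _); apply: eq_bigr => ? _; rewrite !mxE.
split=> -[c [nz [d eq_cd]]]; exists c; split => //.
  exists [ffun l => d l] => i; apply/eqP; rewrite -subr_eq0.
  by under [X in _ - X]eq_bigr do rewrite ffunE; rewrite -entry eq_cd subrr mxE.
exists d; apply/eqP; rewrite -subr_eq0; apply/eqP/matrixP => i j0.
by rewrite ord1 entry eq_cd subrr mxE.
Qed.

Lemma encodes_vcols_upd es y Y : (nreserved F k <= y)%N -> encodes_vcols es ->
  encodes_vcols (upd es y Y).
Proof. by move=> le_y esQ l a; rewrite upd_neq ?esQ // ltn_eqF ?(leq_trans (vcvar_lt l a)). Qed.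

Lemma sat_dep_form b x ef es X : (x < b)%N -> (nreserved F k <= b)%N ->
  es x = inr @: X -> encodes_vcols es -> sat_A ef es (dep_form F k b x) <-> mdependent A vs X.
Proof.
move=> ltxb leNb esX esQ.
have coefvar_neq y (a : F) : (y < b)%N -> coefvar b a != y.
  by move=> ltyb; rewrite gtn_eqF // (leq_trans ltyb) ?leq_addr.
have esPX (P : F -> {set U}) : upds es (coefvar b) P x = inr @: X.
  by rewrite upds_out ?esX // => a; apply: coefvar_neq.
have esPQ (P : F -> {set U}) : encodes_vcols (upds es (coefvar b) P).
  by move=> l a; rewrite upds_out ?esQ // => a'; rewrite coefvar_neq ?(leq_trans (vcvar_lt l a)).
have inj_coefvar := @coefvar_inj F b.
rewrite mdependentE sat_bigOr; split=> [[d _ /(sat_exS_family _ _ _ inj_coefvar)[P]] | ].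
  case/sat_and => /(sat_coef_classes_form_cols _ _ (esPX P)) [c esc] /sat_and[nz rows].
  exists c; split; first exact/(sat_nonzero_coef_form ef esc).
  by exists d; apply/(sat_row_eqns_form d ef (esPQ P) esc).
move=> [c [nz [d rows]]]; exists d; rewrite ?mem_enum //.
apply/(sat_exS_family _ _ _ inj_coefvar); exists (coef_set X c).
have esc : encodes_coefs (upds es (coefvar b) (coef_set X c)) b X c.
  by move=> a; rewrite upds_eq.
split; first by apply/(sat_coef_classes_form_cols _ ef (esPX _)); exists c.
split; first exact/(sat_nonzero_coef_form ef esc).
exact/(sat_row_eqns_form d ef (esPQ _) esc).
Qed.

Lemma sat_circuit_form b x ef es X : (x < b)%N -> (nreserved F k <= b)%N ->
  es x = inr @: X -> encodes_vcols es ->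
  sat_A ef es (circuit_form F k b x) <-> mcircuit A vs X.
Proof.
move=> ltxb leNb esX esQ.
have esbX Y : upd es b Y x = inr @: X by rewrite upd_neq ?esX ?ltn_eqF.
have dep_Y (Y : {set 'I_n}) :
    sat_A ef (upd es b (inr @: Y)) (dep_form F k b.+1 b) <-> mdependent A vs Y.
  apply: sat_dep_form; rewrite ?upd_eq //; first exact: leqW.
  exact: encodes_vcols_upd.
rewrite /circuit_form sat_and sat_allS.
rewrite (sat_dep_form ef (ltnW ltxb : x < b.+1)%N (leqW leNb) esX esQ).
split=> -[depX minX]; split=> // Y.
  rewrite properE => /andP[YX XY]; apply/dep_Y; apply: (iffLR (sat_imp _ _ _ _) (minX _)).
  split; first by apply/sat_subset; rewrite upd_eq esbX imset_inr_subset.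
  by move/sat_subset; rewrite upd_eq esbX imset_inr_subset (negPf XY).
apply/sat_imp => -[/sat_subset]; rewrite upd_eq esbX => /subset_inr_imsetP[Y' Y'X ->].
move/sat_subset; rewrite upd_eq esbX imset_inr_subset => /negP XY' /dep_Y.
by apply: minX; rewrite properE Y'X XY'.
Qed.

Lemma sat_clique_form b x ef es (S T : {set 'I_n}) : (x < b)%N -> (nreserved F k <= b)%N ->
  es x = inr @: S -> es 1%N = inr @: T -> encodes_vcols es ->
  sat_A ef es (clique_form F k b x) <-> clique_in A vs T S.
Proof.
move=> ltxb leNb esS esT esQ.
have esbT Y : upd es b Y 1%N = inr @: T by rewrite upd_neq ?esT ?ltn_eqF ?(leq_trans _ leNb).
have circ_C ef' (C : {set 'I_n}) :
    sat_A ef' (upd es b (inr @: C)) (circuit_form F k b.+2 b) <-> mcircuit A vs C.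
  exact: (sat_circuit_form ef' (leqW (ltnSn b)) (leqW (leqW leNb)) (upd_eq _ _ _)
                           (encodes_vcols_upd _ leNb esQ)).
rewrite sat_all; split=> [cl j j' Sj Sj' ne | cl u].
  have /sat_all/(_ (inr j'))/sat_imp := cl (inr j).
  case=> [| C' [/sat_subset]].
    rewrite /= upd_updSn upd_eq esS !mem_inr_imset; split=> //; split=> // -[jj'].
    by rewrite jj' eqxx in ne.
  rewrite upd_eq esbT => /subset_inr_imsetP[C CT ->] [jC [j'C /circ_C circC]].
  by exists C; move: jC j'C; rewrite /= upd_updSn !upd_eq !mem_inr_imset.
apply/sat_all => w; apply/sat_imp => /sat_and[Su /sat_and[Sw nuw]].
rewrite /= upd_updSn esS in Su; rewrite /= upd_eq esS in Sw.
rewrite /= upd_updSn upd_eq in nuw.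
case: u Su nuw => [r | j]; first by rewrite inl_notin_inr_imset.
case: w Sw => [r | j']; first by rewrite inl_notin_inr_imset.
rewrite !mem_inr_imset => Sj' Sj nejj'.
have [|C [circC CT jC j'C]] := cl j j' Sj Sj'; first by apply: contra_notN nejj' => /eqP ->.
exists (inr @: C); apply/sat_and; split.
  by apply/sat_subset; rewrite upd_eq esbT imset_inr_subset.
apply/sat_and; split; first by rewrite /= upd_updSn upd_eq mem_inr_imset.
apply/sat_and; split; first by rewrite /= !upd_eq mem_inr_imset.
exact/circ_C.
Qed.

Lemma sat_component_form ef es (S T : {set 'I_n}) :
  es 0%N = inr @: S -> es 1%N = inr @: T -> encodes_vcols es ->
  sat_A ef es (component_form F k) <-> conn_comp A vs T S.
Proof.
move=> esS esT esQ; set N := nreserved F k.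
have esNS Y : upd es N Y 0%N = inr @: S by rewrite upd_neq ?esS.
have esNT Y : upd es N Y 1%N = inr @: T by rewrite upd_neq ?esT.
have clique_Y (Y : {set 'I_n}) :
    sat_A ef (upd es N (inr @: Y)) (clique_form F k N.+1 N) <-> clique_in A vs T Y.
  exact: (sat_clique_form ef (ltnSn N) (leqW (leqnn N)) (upd_eq _ _ _) (esNT _)
                          (encodes_vcols_upd _ (leqnn N) esQ)).
rewrite /component_form sat_and sat_subset esS esT imset_inr_subset sat_and.
rewrite (sat_clique_form ef _ (leqnn N) esS esT esQ) // sat_allS.
split=> [[ST [clS maxS]] | [ST clS maxS]].
  split=> // S' SS' S'T /clique_Y clS'.
  suff /sat_subset : sat_A ef (upd es N (inr @: S')) (CSubset N 0).
    by rewrite upd_eq esNS imset_inr_subset => S'S; apply/eqP; rewrite eqEsubset S'S.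
  apply: (iffLR (sat_imp _ _ _ _) (maxS _)).
  apply/sat_and; split; first by apply/sat_subset; rewrite upd_eq esNS imset_inr_subset.
  apply/sat_and; split=> //.
  by apply/sat_subset; rewrite upd_eq esNT imset_inr_subset.
split=> //; split=> // Y; apply/sat_imp => /sat_and[/sat_subset SY /sat_and[/sat_subset YT]].
rewrite upd_eq esNT in YT; case/subset_inr_imsetP: YT SY => Y' Y'T ->.
rewrite upd_eq esNS imset_inr_subset => SY' /clique_Y clY'.
by apply/sat_subset; rewrite upd_eq esNS (maxS _ SY' Y'T clY').
Qed.
End Semantics.

Theorem lemma10 (F : finFieldType) (k : nat) :
  exists phi : cmso F,
    forall (m n : nat) (A : 'M[F]_(m, n)) (S T : {set 'I_n})
           (Q : 'I_k -> F -> {set 'I_m}),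
      S \subset T -> (forall i, is_vcol (Q i)) ->
      forall (ef : nat -> ('I_m + 'I_n)%type) (es : nat -> {set ('I_m + 'I_n)%type}),
        es 0%N = inr @: S -> es 1%N = inr @: T ->
        (forall (i : 'I_k) (a : F), es (vcvar i a) = inl @: Q i a) ->
        (@sat F (SA A) ef es phi <->
         conn_comp A (fun i => vvec (Q i)) T S).
Proof.
exists (component_form F k) => m n A S T Q _ vcolQ ef es esS esT esQ.
exact: sat_component_form.
Qed.
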